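(* Let $p$ be an odd prime and $\alpha$ an indeterminate over $\mathbb F_p$. Then \[ \prod_{s=1}^{p-2}b_{1,s}(\alpha)=\prod_{k=2}^{p-1}(1+\alpha/k)^{k-1}=\frac{L_{p-1}^{(\alpha^p)}(\alpha^p-\alpha)}{1-\alpha^{p-1}}, \] where $L_{p-1}^{(\alpha^p)}(\alpha^p-\alpha)$ is obtained from $L_{p-1}^{(\alpha)}(X)$ by substituting $\alpha^p$ for $\alpha$ and $\alpha^p-\alpha$ for $X$.
   Context: $\mathbb F_p$ is the field of $p$ elements, $\binom{x}{m}=x(x-1)\cdots(x-m+1)/m!$. $L_{p-1}^{(\alpha)}(X)=\sum_{k=0}^{p-1}\binom{\alpha-1}{p-1-k}\frac{(-X)^k}{k!}\in\mathbb F_p[\alpha,X]$. For integers $0<r,s<p$ (interpreted as elements of $\mathbb F_p$), $b_{r,s}(\alpha)=\sum_{k=0}^{p-1}(-r/s)^k\binom{r\alpha-1}{p-1-k}\binom{s\alpha-1}{k}\in\mathbb F_p[\alpha]$. *)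

From HB Require Import structures.
From mathcomp Require Import all_boot all_order all_algebra.
Set Implicit Arguments. Unset Strict Implicit. Unset Printing Implicit Defensive.
Import GRing.Theory.
Local Open Scope ring_scope.

Definition pbinom (F : fieldType) (x : {poly F}) (m : nat) : {poly F} :=
  ((m`!)%:R^-1) *: \prod_(i < m) (x - (i%:R)%:P).

(* L_{p-1}^{(a)}(X) = sum_{k=0}^{p-1} binom(a-1, p-1-k) (-X)^k / k!,
   given as a function of the two polynomials substituted for alpha and X. *)
Definition laguerre (p : nat) (a X : {poly 'F_p}) : {poly 'F_p} :=
  \sum_(k < p) pbinom (a - 1) (p.-1 - k) * (((k`!)%:R^-1) *: (- X) ^+ k).

Definition bpoly (p r s : nat) : {poly 'F_p} :=
  \sum_(k < p) (- (r%:R : 'F_p) / s%:R) ^+ k *: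
     (pbinom (r%:R *: 'X - 1) (p.-1 - k) * pbinom (s%:R *: 'X - 1) k).

(* Each b_{1,s} has degree at most (p-1)/2, value 1 at 0, and vanishes at every
   a in {1,...,p-1} with a + r < p, where r in [0,p) represents s a - 1.  The
   involution a |-> p - a exchanges these a with the others, so there are exactly
   (p-1)/2 of them and b_{1,s} = prod (1 - alpha/a) over them.  For fixed a the map
   s |-> s a - 1 permutes F_p, so a occurs for exactly p-1-a values of s; after
   a |-> p - a this is the first identity.
   For the second, both sides have degree at most p(p-1)/2, take the value 1 at 0
   and are divisible by prod_c (alpha - c)^(p-c): on the Laguerre side, the shift
   alpha |-> alpha + c fixes alpha^p - alpha and moves alpha^p to alpha^p + c.
   Both degree bounds come from the generating series (1 + T)^(alpha-1)
   (1 - T/s)^(s alpha - 1) and (1 + T)^(alpha^p-1) exp((alpha - alpha^p) T),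
   truncated mod T^p: a first-order ODE in T yields a three-term recurrence for
   the coefficients. *)

From HB Require Import structures.
From mathcomp Require Import all_boot all_order all_algebra.
From mathcomp Require Import finfield.
From mathcomp Require Import zify ring.
Set Implicit Arguments. Unset Strict Implicit. Unset Printing Implicit Defensive.
Import GRing.Theory.
Local Open Scope ring_scope.

Section PolySize.
Variable R : nzRingType.
Implicit Types x y : {poly R}.

Lemma size_polyD_leq x y n :
  (size x <= n)%N -> (size y <= n)%N -> (size (x + y)%R <= n)%N.
Proof. by move=> xn yn; apply: leq_trans (size_polyD _ _) _; rewrite geq_max xn. Qed.

Lemma size_polyB_leq x y n :
  (size x <= n)%N -> (size y <= n)%N -> (size (x - y)%R <= n)%N.
Proof. by move=> xn yn; apply: size_polyD_leq; rewrite ?size_polyN. Qed.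

Lemma size_polyM_leq x y m n :
  (size x <= m.+1)%N -> (size y <= n.+1)%N -> (size (x * y)%R <= (m + n).+1)%N.
Proof.
move=> xm yn; apply: leq_trans (size_polyMleq _ _) _.
by have := leq_add xm yn; rewrite addnS; lia.
Qed.

Lemma size_big_prod_leq (I : Type) (s : seq I) (f : I -> {poly R}) (w : I -> nat) :
  (forall i, size (f i) <= (w i).+1)%N ->
  (size (\prod_(i <- s) f i)%R <= (\sum_(i <- s) w i).+1)%N.
Proof.
move=> fw; elim: s => [|i s IH]; first by rewrite !big_nil size_poly1.
by rewrite !big_cons; apply: size_polyM_leq.
Qed.

End PolySize.

Section FieldPoly.
Variable F : fieldType.
Implicit Types (f g D : {poly F}) (z : F).

Lemma dvdp_size_horner_eq D f g z : D %| f -> D %| g ->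
  (size f <= size D)%N -> (size g <= size D)%N -> D.[z] != 0 ->
  f.[z] = g.[z] -> f = g.
Proof.
move=> Df Dg sf sg Dz0 fgz; apply/eqP; rewrite -subr_eq0.
have D0 : D != 0 by apply: contraNneq Dz0 => ->; rewrite horner0.
have Dfg := dvdp_sub Df Dg; rewrite -(divpK Dfg).
have : (size ((f - g) %/ D)%R <= 1)%N.
  rewrite size_divp // leq_subLR addn1 prednK ?size_poly_gt0 //.
  exact: size_polyB_leq.
move=> /size1_polyC E; rewrite E mul_polyC scale_poly_eq0 (negbTE D0) orbF.
have := congr1 (horner^~ z) (divpK Dfg); rewrite {1}E mul_polyC hornerZ !hornerE fgz.
by rewrite subrr => /eqP; rewrite mulf_eq0 (negbTE Dz0) orbF.
Qed.

Lemma dvdp_prod_XsubC_exp (I : eqType) (s : seq I) (r : I -> F) (m : I -> nat) f :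
  uniq (map r s) -> (forall i, i \in s -> ('X - (r i)%:P) ^+ m i %| f) ->
  \prod_(i <- s) ('X - (r i)%:P) ^+ m i %| f.
Proof.
elim: s => [|i s IH] /=; first by rewrite big_nil dvd1p.
case/andP => ri_s us dvd_f; rewrite big_cons Gauss_dvdp ?dvd_f ?mem_head //=.
  by apply: IH => // j js; apply: dvd_f; rewrite in_cons js orbT.
apply: coprimep_expl; rewrite coprimep_sym coprimep_XsubC /root horner_prod.
rewrite prodf_seq_neq0; apply/allP => j js; rewrite horner_exp expf_neq0 //.
by rewrite !hornerE subr_eq0; apply: contra ri_s => /eqP ->; apply: map_f.
Qed.

Lemma dvdp_XsubC_exp_shift f z n :
  'X ^+ n %| f \Po ('X + z%:P) -> ('X - z%:P) ^+ n %| f.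
Proof.
by move=> /(dvdp_comp_poly ('X - z%:P)); rewrite comp_polyXaddC_K rmorphXn /= comp_polyX.
Qed.

Lemma poly_eq_prod_roots f (rs : seq F) : uniq rs -> 0 \notin rs ->
  all (root f) rs -> (size f <= (size rs).+1)%N -> f.[0] = 1 ->
  f = \prod_(r <- rs) (1 - r^-1 *: 'X).
Proof.
move=> urs rs0 rootf sf f0; set D := \prod_(r <- rs) ('X - r%:P).
have sD : size D = (size rs).+1 by rewrite size_prod_XsubC.
have r0 r : r \in rs -> r != 0 by apply: contraTneq => ->.
apply: (@dvdp_size_horner_eq D _ _ 0).
- by apply: uniq_roots_dvdp; rewrite ?uniq_rootsE.
- apply: uniq_roots_dvdp; rewrite ?uniq_rootsE //; apply/allP => r rrs.
  by rewrite (big_rem r) //= rootM /root !hornerE mulVf ?subrr ?eqxx ?r0.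
- by rewrite sD.
- rewrite sD -[in X in (_ <= X.+1)%N]sum1_size; apply: size_big_prod_leq => r.
  apply: size_polyB_leq; first by rewrite size_poly1.
  by apply: leq_trans (size_scale_leq _ _) _; rewrite size_polyX.
- rewrite /D horner_prod prodf_seq_neq0; apply/allP => r rrs.
  by rewrite !hornerE oppr_eq0 r0.
- by rewrite f0 horner_prod big1 // => r _; rewrite !hornerE subr0.
Qed.

End FieldPoly.

Section GeneralizedBinomial.
Variable F : fieldType.
Implicit Types (x q : {poly F}) (z : F).

Lemma pbinom0 x : pbinom x 0 = 1.
Proof. by rewrite /pbinom big_ord0 fact0 invr1 scale1r. Qed.

Lemma horner_pbinom x m z :
  (pbinom x m).[z] = (m`!%:R)^-1 * \prod_(i < m) (x.[z] - i%:R).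
Proof. by rewrite /pbinom hornerZ horner_prod; under eq_bigr do rewrite !hornerE. Qed.

Lemma dvdp_pbinom x m j : (j < m)%N -> x - j%:R%:P %| pbinom x m.
Proof.
move=> jm; rewrite /pbinom -mul_polyC; apply: dvdp_mull.
by rewrite (bigD1 (Ordinal jm)) //=; apply: dvdp_mulr.
Qed.

Lemma pbinom_root x m z j : (j < m)%N -> x.[z] = j%:R -> (pbinom x m).[z] = 0.
Proof.
move=> jm xz; have /dvdpP[q ->] := dvdp_pbinom x jm.
by rewrite hornerM !hornerE xz subrr mulr0.
Qed.

Lemma horner_pbinom_N1 x m z : m`!%:R != 0 :> F -> x.[z] = -1 ->
  (pbinom x m).[z] = (-1) ^+ m.
Proof.
move=> m0 xz; rewrite horner_pbinom xz.
have -> : \prod_(i < m) (-1 - i%:R) = (-1) ^+ m * m`!%:R :> F.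
  elim: m {m0} => [|m IH]; first by rewrite big_ord0 expr0 fact0 mulr1.
  by rewrite big_ord_recr /= IH factS natrM exprS -natr1; ring.
by rewrite mulrCA mulVf ?mulr1.
Qed.

Lemma pbinomS x n : n.+1%:R != 0 :> F ->
  pbinom x n.+1 *+ n.+1 = (x - n%:R%:P) * pbinom x n.
Proof.
move=> n0; rewrite /pbinom big_ord_recr /= -scaler_nat scalerA factS natrM invfM.
by rewrite mulrA mulfV ?mul1r // -scalerAr mulrC.
Qed.

Lemma comp_pbinom x q m : pbinom x m \Po q = pbinom (x \Po q) m.
Proof.
rewrite /pbinom comp_polyZ rmorph_prod; congr (_ *: _); apply: eq_bigr => i _.
by rewrite rmorphB /= comp_polyC.
Qed.

End GeneralizedBinomial.

Section TruncatedODE.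
Variable R : comNzRingType.
Implicit Types (f g h E G : {poly R}) (u v c d : R).

Definition eq_mod_Xn n f g := forall i, (i < n)%N -> f`_i = g`_i.

Lemma eq_mod_XnD n f1 f2 g1 g2 :
  eq_mod_Xn n f1 g1 -> eq_mod_Xn n f2 g2 -> eq_mod_Xn n (f1 + f2) (g1 + g2).
Proof. by move=> e1 e2 i ilt; rewrite !coefD e1 ?e2. Qed.

Lemma eq_mod_XnMl n h f g : eq_mod_Xn n f g -> eq_mod_Xn n (h * f) (h * g).
Proof.
move=> e i ilt; rewrite !coefM; apply: eq_bigr => j _; rewrite e //.
exact: leq_ltn_trans (leq_subr _ _) ilt.
Qed.

Lemma eq_mod_Xn_ode_mul n u v c1 c2 E1 E2 :
  eq_mod_Xn n ((1 + u%:P * 'X) * E1^`()) (c1%:P * E1) ->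
  eq_mod_Xn n ((1 + v%:P * 'X) * E2^`()) (c2%:P * E2) ->
  eq_mod_Xn n ((1 + u%:P * 'X) * (1 + v%:P * 'X) * (E1 * E2)^`())
              (((c1 + c2)%:P + (v * c1 + u * c2)%:P * 'X) * (E1 * E2)).
Proof.
move=> ode1 ode2; set a := 1 + u%:P * 'X; set b := 1 + v%:P * 'X.
have -> : a * b * (E1 * E2)^`() = b * E2 * (a * E1^`()) + a * E1 * (b * E2^`()).
  by rewrite derivM; ring.
have -> : ((c1 + c2)%:P + (v * c1 + u * c2)%:P * 'X) * (E1 * E2) =
          b * E2 * (c1%:P * E1) + a * E1 * (c2%:P * E2).
  by rewrite /a /b !rmorphD !rmorphM /=; ring.
exact: eq_mod_XnD (eq_mod_XnMl _ ode1) (eq_mod_XnMl _ ode2).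
Qed.

Lemma coefX_deriv f i : ('X * f^`())`_i = f`_i *+ i.
Proof. by case: i => [|i]; rewrite coefXM /= ?coef_deriv ?mulr0n. Qed.

Lemma coef_ode_rec n u v c d G :
  eq_mod_Xn n ((1 + u%:P * 'X) * (1 + v%:P * 'X) * G^`()) ((c%:P + d%:P * 'X) * G) ->
  ((0 < n)%N -> G`_1 = c * G`_0) /\
  (forall k, (k.+1 < n)%N ->
     G`_k.+2 *+ k.+2 = (c - (u + v) *+ k.+1) * G`_k.+1 + (d - u * v *+ k) * G`_k).
Proof.
rewrite (_ : _ * _ * G^`() = G^`() + (u + v)%:P * ('X * G^`())
                             + (u * v)%:P * ('X * ('X * G^`()))); last first.
  by rewrite !rmorphD !rmorphM /=; ring.
rewrite mulrDl -mulrA => ode; split=> [n0 | k kn].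
  have := ode 0%N n0; rewrite !coefD !coefCM !coefX_deriv !coefXM /=.
  by rewrite mulr0n !mulr0 !addr0 coef_deriv.
have := ode k.+1 kn; rewrite !coefD !coefCM coefX_deriv coefXM coefX_deriv !coefXM.
rewrite coef_deriv /= => e.
apply: (addIr ((u + v) * G`_k.+1 *+ k.+1 + u * v * G`_k *+ k)).
by rewrite -!mulrnAr addrA e; ring.
Qed.

End TruncatedODE.

Section TruncatedSeries.
Variables (F : fieldType) (N : nat).
Hypothesis natr_neq0 : forall n, (0 < n < N)%N -> n%:R != 0 :> F.

(* The truncations mod T^N of (1 + t T)^b and exp (g T), as series in T over F[alpha]. *)
Definition binom_series (b : {poly F}) (t : F) : {poly {poly F}} :=
  \poly_(k < N) (t ^+ k *: pbinom b k).

Definition exp_series (g : {poly F}) : {poly {poly F}} :=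
  \poly_(k < N) ((k`!%:R)^-1 *: g ^+ k).

Lemma binom_series_ode b t :
  eq_mod_Xn N.-1 ((1 + (t%:P)%:P * 'X) * (binom_series b t)^`())
                 ((t%:P * b)%:P * binom_series b t).
Proof.
move=> n nN; rewrite mulrDl mul1r coefD -mulrA coefCM coefX_deriv coef_deriv coefCM.
rewrite !coef_poly !ifT //; try lia.
rewrite [X in X + _]scalerMnr pbinomS; last by apply: natr_neq0; lia.
rewrite [X in _ + _ * X]scalerMnr -!mul_polyC -mulr_natr exprS mul1r polyC_natr.
by rewrite !rmorphM; ring.
Qed.

Lemma exp_series_ode g :
  eq_mod_Xn N.-1 (exp_series g)^`() (g%:P * exp_series g).
Proof.
move=> n nN; rewrite coef_deriv coefCM !coef_poly !ifT //; try lia.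
rewrite scalerMnl -mulr_natr factS natrM invfM mulrAC mulVf ?mul1r.
  by rewrite exprS scalerAr.
by apply: natr_neq0; lia.
Qed.

(* Through [c] the recurrence gains at most [e1] in degree per index, through [d]
   at most [e2] per two indices. *)
Lemma size_coef_ode (u v : F) (c d : {poly F}) (e1 e2 : nat) (G : {poly {poly F}}) :
  (e1.*2 <= e2)%N -> (size c <= e1.+1)%N -> (size d <= e2.+1)%N -> (size (G`_0)%R <= 1)%N ->
  eq_mod_Xn N.-1 ((1 + (u%:P)%:P * 'X) * (1 + (v%:P)%:P * 'X) * G^`())
                 ((c%:P + d%:P * 'X) * G) ->
  forall n, (n < N)%N -> (size (G`_n)%R <= (e1 * n + (e2 - e1.*2) * n./2).+1)%N.
Proof.
move=> e12 sc sd sG0 /coef_ode_rec[G1 Grec].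
set B := fun n => (e1 * n + (e2 - e1.*2) * n./2)%N.
have BSS n : B n.+2 = (B n + e2)%N by rewrite /B /=; nia.
have BS n : (e1 + B n.+1 <= B n.+2)%N.
  by rewrite BSS /B /= uphalf_half; case: (odd n) => /=; nia.
have B_le n : (B n <= B n.+2)%N by rewrite BSS leq_addr.
have size_sub_const (x : {poly F}) (a : F) m k :
    (size x <= m.+1)%N -> (size (x - a%:P *+ k)%R <= m.+1)%N.
  move=> xm; apply: size_polyB_leq => //.
  by rewrite -polyCMn; apply: leq_trans (size_polyC_leq1 _) _.
suff H n : (n.+1 < N)%N ->
    (size (G`_n)%R <= (B n).+1)%N /\ (size (G`_n.+1)%R <= (B n.+1).+1)%N.
  by case=> [|n] nN; [apply: leq_trans sG0 _ | case: (H n nN)].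
elim: n => [|n IH] nN.
  split; first exact: leq_trans sG0 _.
  rewrite G1; last by lia.
  by apply: leq_trans (size_polyM_leq sc sG0) _; rewrite /B /=; lia.
have [IH0 IH1] := IH (ltnW nN); split=> //.
have -> : G`_n.+2 = (n.+2%:R)^-1 *: (G`_n.+2 *+ n.+2).
  by rewrite -scaler_nat scalerA mulVf ?scale1r ?natr_neq0 //; lia.
rewrite Grec; last by lia.
apply: leq_trans (size_scale_leq _ _) _; apply: size_polyD_leq.
  rewrite -rmorphD; apply: leq_trans (size_polyM_leq (size_sub_const _ _ _ _ sc) IH1) _.
  exact: BS.
rewrite -rmorphM; apply: leq_trans (size_polyM_leq (size_sub_const _ _ _ _ sd) IH0) _.
by rewrite BSS addnC.
Qed.

End TruncatedSeries.

Section BpolyProduct.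
Variable p : nat.
Hypothesis p_prime : prime p.
Hypothesis p_odd : odd p.
Local Notation F := 'F_p.
Local Notation P := {poly 'F_p}.

Let p_gt1 : (1 < p)%N := prime_gt1 p_prime.
Let p_gt2 : (2 < p)%N.
Proof. by move: p_gt1 p_odd; rewrite leq_eqVlt => /orP[/eqP <- //|]. Qed.

Lemma natrFp_neq0 n : (0 < n < p)%N -> n%:R != 0 :> F.
Proof.
case/andP=> n0 np; rewrite -val_eqE /= val_Fp_nat // modn_small //.
by rewrite -lt0n.
Qed.

Lemma natrFp_inj m n : (m < p)%N -> (n < p)%N -> m%:R = n%:R :> F -> m = n.
Proof. by move=> mp np /(congr1 val) /=; rewrite !val_Fp_nat // !modn_small. Qed.

Lemma factFp_neq0 n : (n < p)%N -> n`!%:R != 0 :> F.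
Proof.
elim: n => [|n IH] np; first by rewrite fact0 oner_neq0.
by rewrite factS natrM mulf_neq0 ?IH ?natrFp_neq0 //; lia.
Qed.

Lemma natrFpB n : (n <= p)%N -> (p - n)%:R = - n%:R :> F.
Proof. by move=> np; rewrite natrB // pchar_Fp_0 // sub0r. Qed.

Lemma natrFp_pred : p.-1%:R = -1 :> F.
Proof. by rewrite -subn1 natrFpB // prime_gt0. Qed.

Lemma expFp_card (x : F) : x ^+ p = x.
Proof. by rewrite -{2}(expf_card x) card_Fp. Qed.

Lemma expFp_pred (x : F) : x != 0 -> x ^+ p.-1 = 1.
Proof.
by move=> x0; apply: (mulIf x0); rewrite mul1r -exprSr prednK ?expFp_card ?prime_gt0.
Qed.

Lemma signFp_pred : (-1) ^+ p.-1 = 1 :> F.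
Proof. by rewrite expFp_pred // oppr_eq0 oner_eq0. Qed.

Lemma geomFp (x : F) : x != 1 -> \sum_(k < p) x ^+ k = 1.
Proof.
move=> x1; apply: (mulfI (_ : x - 1 != 0)); first by rewrite subr_eq0.
by rewrite -subrX1 expFp_card mulr1.
Qed.

(* [res1 s a] is the representative in [0, p) of [s a - 1]. *)
Definition res1 s a := ((s * a + p.-1) %% p)%N.

Lemma res1_lt s a : (res1 s a < p)%N.
Proof. by rewrite ltn_pmod ?prime_gt0. Qed.

Lemma natr_res1 s a : (res1 s a)%:R = s%:R * a%:R - 1 :> F.
Proof. by rewrite Fp_nat_mod // natrD natrM natrFp_pred. Qed.

Lemma root_bpoly s a : (0 < a)%N -> (a + res1 s a < p)%N -> root (bpoly p 1 s) a%:R.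
Proof.
move=> a0 ap; rewrite /root /bpoly horner_sum; apply/eqP/big1 => k _.
rewrite hornerZ hornerM; have [ka | ak] := ltnP a.-1 (p.-1 - k).
  rewrite (pbinom_root ka) ?mul0r ?mulr0 // !hornerE.
  by rewrite -{1}(prednK a0) -natr1 addrK.
have kr : (res1 s a < k)%N by have := ltn_ord k; lia.
by rewrite (pbinom_root kr) ?mulr0 // natr_res1 !hornerE.
Qed.

Lemma bpoly_at0 s : (0 < s < p.-1)%N -> (bpoly p 1 s).[0] = 1.
Proof.
move=> s_bd; rewrite /bpoly horner_sum -[RHS](@geomFp (- 1%:R / s%:R)).
  apply: eq_bigr => k _; have kp := ltn_ord k.
  have N1 r : (r *: 'X - 1 : P).[0] = -1 by rewrite !hornerE.
  rewrite hornerZ hornerM !horner_pbinom_N1 ?N1 ?factFp_neq0 //; try lia.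
  by rewrite -exprD subnK ?signFp_pred ?mulr1 //; lia.
have s0 : s%:R != 0 :> F by apply: natrFp_neq0; lia.
apply: contra_neq (_ : s.+1%:R != 0 :> F) => [st|]; last by apply: natrFp_neq0; lia.
rewrite -natr1; have := congr1 ( *%R^~ s%:R) st; rewrite divfK // mul1r => <-.
by rewrite addNr.
Qed.

Lemma res1_neq_pred s a : (0 < s < p)%N -> (0 < a < p)%N -> res1 s a != p.-1.
Proof.
move=> s_bd a_bd; apply: contra_neq (_ : s%:R * a%:R != 0 :> F) => [ra|].
  have := congr1 (fun n => n%:R : F) ra; rewrite /= natr_res1 natrFp_pred.
  by move/eqP; rewrite subr_eq addNr => /eqP.
by rewrite mulf_neq0 ?natrFp_neq0.
Qed.

Lemma res1_add_neq_pred s a : (0 < a < p)%N -> (s.+1 < p)%N ->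
  (a + res1 s a)%N != p.-1.
Proof.
move=> a_bd sp; apply: contra_neq (_ : s.+1%:R * a%:R != 0 :> F) => [ra|].
  have := congr1 (fun n => n%:R : F) ra; rewrite /= natrD natr_res1 natrFp_pred => e.
  by apply: (addIr (-1)); rewrite add0r -[X in _ = X]e -natr1; ring.
by rewrite mulf_neq0 ?natrFp_neq0.
Qed.

Lemma res1_opp s a : (0 < s < p)%N -> (0 < a < p)%N ->
  res1 s (p - a) = (p - 2 - res1 s a)%N.
Proof.
move=> s_bd a_bd; have := res1_neq_pred s_bd a_bd; have := res1_lt s a => rp rpred.
apply: natrFp_inj; rewrite ?res1_lt //; first by lia.
rewrite natr_res1 -subnDA natrFpB ?natrD ?natr_res1 ?natrFpB; try lia.
by rewrite mulrN; ring.
Qed.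

Lemma bpoly_root_opp s a : (0 < s < p.-1)%N -> (0 < a < p)%N ->
  (p - a + res1 s (p - a) < p)%N = ~~ (a + res1 s a < p)%N.
Proof.
move=> s_bd a_bd; rewrite res1_opp; try lia.
have := res1_add_neq_pred (s := s) a_bd; have := res1_neq_pred (s := s) _ a_bd.
have := res1_lt s a; move=> rp /(_ _)/eqP rpred /(_ _)/eqP arpred.
apply/idP/idP; lia.
Qed.

Lemma card_roots_bpoly s : (0 < s < p.-1)%N ->
  (\sum_(1 <= a < p | a + res1 s a < p) 1)%N = p./2.
Proof.
move=> s_bd; set C := (\sum_(1 <= a < p | _) 1)%N.
suff CC : (C + C = p.-1)%N by have := odd_double_half p; rewrite p_odd; lia.
rewrite {1}/C big_nat_rev /= /C big_mkcond [X in (_ + X)%N]big_mkcond -big_split /=.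
rewrite (eq_big_nat _ _ (F2 := fun=> 1%N)) ?sum_nat_const_nat ?muln1 ?subn1 // => a a_bd.
by rewrite add1n subSS bpoly_root_opp //; case: (_ < p)%N.
Qed.

Lemma card_bpoly_vanishing a : (0 < a < p)%N ->
  (\sum_(1 <= s < p.-1 | a + res1 s a < p) 1)%N = (p.-1 - a)%N.
Proof.
move=> a_bd; have a0 : a%:R != 0 :> F by apply: natrFp_neq0.
pose h (s : 'I_p) : 'I_p := Ordinal (res1_lt s a).
have h_inj : injective h.
  move=> s1 s2 /(congr1 (fun i : 'I_p => (val i)%:R : F)) /=; rewrite !natr_res1.
  by move=> /addIr /(mulIf a0) /natrFp_inj s12; apply/val_inj/s12.
have all_s : (\sum_(0 <= s < p.-1.+1 | a + res1 s a < p) 1)%N = (p - a)%N.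
  rewrite prednK ?prime_gt0 // big_mkord (eq_bigl (fun s => h s < 0 + (p - a)))%N => [|s].
    2: by rewrite /= add0n; lia.
  rewrite -(@reindex_inj _ _ _ _ h (fun i => i < 0 + (p - a))%N (fun=> 1%N) h_inj).
  change (\sum_(i < p | i < 0 + (p - a)) 1 = p - a)%N.
  rewrite -(big_mkord (fun i => i < 0 + (p - a))%N (fun=> 1%N)) sum1_count /index_iota subn0.
  by rewrite -size_filter filter_iota_ltn ?size_iota ?leq_subr.
have res1_0 : res1 0 a = p.-1 by rewrite /res1 modn_small //; lia.
have res1_pred : res1 p.-1 a = (p.-1 - a)%N.
  apply: natrFp_inj; rewrite ?res1_lt //; first by lia.
  by rewrite natr_res1 natrB ?natrFp_pred; [ring | lia].
move: all_s; rewrite big_mkcond big_ltn // big_nat_recr /=; last by lia.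
rewrite res1_0 res1_pred ifF ?ifT -?big_mkcond; try lia.
by rewrite add0n addn1 => /(congr1 predn) /= ->; lia.
Qed.

Lemma size_bpoly s : (0 < s < p.-1)%N -> (size (bpoly p 1 s) <= p./2.+1)%N.
Proof.
move=> s_bd; set t : F := - 1%:R / s%:R.
set b1 : P := 1%:R *: 'X - 1; set b2 : P := s%:R *: 'X - 1.
set G := binom_series p b1 1 * binom_series p b2 t.
have Gp : G`_p.-1 = bpoly p 1 s.
  rewrite coefMr /bpoly prednK ?prime_gt0 //; apply: eq_bigr => k _.
  have kp := ltn_ord k; rewrite !coef_poly !ifT ?expr1n ?scale1r -?scalerAr //; try lia.
  by rewrite /b1 scale1r.
have ode := eq_mod_Xn_ode_mul (binom_series_ode natrFp_neq0 b1 1)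
                              (binom_series_ode natrFp_neq0 b2 t).
have ts : t * s%:R = -1 by rewrite mulfVK ?mulN1r ?natrFp_neq0 //; lia.
have c_const : 1%:P * b1 + t%:P * b2 = (- (1 + t))%:P.
  rewrite /b1 /b2 -!mul_polyC.
  rewrite (_ : _ + _ = (1%:R + t * s%:R)%:P * 'X - (1 + t)%:P); last first.
    by rewrite !rmorphD !rmorphM /=; ring.
  by rewrite ts subrr mul0r sub0r rmorphN.
rewrite c_const in ode.
have size_CM (a : F) (x : P) n : (size x <= n)%N -> (size (a%:P * x)%R <= n)%N.
  by rewrite mul_polyC => /(leq_trans (size_scale_leq _ _)).
have size_b (r : F) : (size (r *: 'X - 1 : P)%R <= 2)%N.
  apply: size_polyB_leq; last by rewrite size_poly1.
  by rewrite (leq_trans (size_scale_leq _ _)) ?size_polyX.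
have sd : (size (t%:P * (1%:P * b1) + 1%:P * (t%:P * b2))%R <= 2)%N.
  by apply: size_polyD_leq; do 2 apply: (size_CM); apply: size_b.
have sG0 : (size (G`_0)%R <= 1)%N.
  by rewrite coef0M !coef_poly prime_gt0 // !expr0 !scale1r !pbinom0 mulr1 size_poly1.
rewrite -Gp; apply: leq_trans (size_coef_ode natrFp_neq0 (e1 := 0) (e2 := 1) isT
  (size_polyC_leq1 _) sd sG0 ode _) _; first by rewrite prednK ?prime_gt0.
by rewrite mul0n add0n subn0 mul1n ltnS half_leq // leq_pred.
Qed.

Lemma bpoly_factor s : (0 < s < p.-1)%N ->
  bpoly p 1 s = \prod_(1 <= a < p | (a + res1 s a < p)%N) (1 - (a%:R : F)^-1 *: 'X).
Proof.
move=> s_bd; rewrite -big_filter.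
rewrite -(big_map (fun a => a%:R : F) xpredT (fun r => 1 - r^-1 *: 'X)).
set S := [seq a <- index_iota 1 p | _].
have S_bd a : a \in S -> (0 < a < p)%N by rewrite mem_filter mem_index_iota => /andP[].
apply: poly_eq_prod_roots.
- rewrite map_inj_in_uniq ?filter_uniq ?iota_uniq // => a b /S_bd a_bd /S_bd b_bd.
  by apply: natrFp_inj; lia.
- by apply/mapP => -[a /S_bd /natrFp_neq0 + a0]; rewrite -a0 eqxx.
- apply/allP => _ /mapP[a aS ->]; apply: root_bpoly; first by have := S_bd a aS; lia.
  by move: aS; rewrite mem_filter => /andP[].
- by rewrite size_map size_filter -sum1_count card_roots_bpoly // size_bpoly.
- exact: bpoly_at0.
Qed.

Definition lin_prod : P := \prod_(2 <= k < p) (1 + (k%:R : F)^-1 *: 'X) ^+ k.-1.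

Lemma lin_prod_from1 : lin_prod = \prod_(1 <= k < p) (1 + (k%:R : F)^-1 *: 'X) ^+ k.-1.
Proof. by rewrite [RHS]big_ltn // expr0 mul1r. Qed.

Lemma prod_bpoly : \prod_(1 <= s < p.-1) bpoly p 1 s = lin_prod.
Proof.
rewrite (eq_big_nat _ _ bpoly_factor); under eq_bigr do rewrite big_mkcond.
rewrite exchange_big_nat /=.
rewrite (eq_big_nat _ _ (F2 := fun a => (1 - (a%:R : F)^-1 *: 'X) ^+ (p.-1 - a))).
  rewrite big_nat_rev big_ltn //= (_ : p.-1 - (1 + p - 2) = 0)%N ?expr0 ?mul1r; last by lia.
  apply: eq_big_nat => k k_bd.
  rewrite add1n subSS natrFpB ?invrN ?scaleNr ?opprK; last by lia.
  by congr (_ ^+ _); lia.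
move=> a a_bd; rewrite -big_mkcond big_const_seq iter_mulr_1 -sum1_count.
by rewrite card_bpoly_vanishing.
Qed.

Lemma size_laguerre : (size (laguerre ('X ^+ p : P) ('X ^+ p - 'X)) <= 'C(p, 2).+1)%N.
Proof.
set b : P := 'X ^+ p - 1; set g : P := - ('X ^+ p - 'X).
set G := binom_series p b 1 * exp_series p g.
have Gp : G`_p.-1 = laguerre ('X ^+ p : P) ('X ^+ p - 'X).
  rewrite coefMr /laguerre prednK ?prime_gt0 //; apply: eq_bigr => k _.
  by have kp := ltn_ord k; rewrite !coef_poly !ifT ?expr1n ?scale1r //; lia.
have ode_exp : eq_mod_Xn p.-1 ((1 + ((0 : F)%:P)%:P * 'X) * (exp_series p g)^`())
                              (g%:P * exp_series p g).
  by rewrite !polyC0 mul0r addr0 mul1r; apply: exp_series_ode natrFp_neq0 g.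
have ode := eq_mod_Xn_ode_mul (binom_series_ode natrFp_neq0 b 1) ode_exp.
have sc : (size (1%:P * b + g)%R <= 2)%N.
  rewrite mul1r /b /g (_ : _ + _ = 'X - 1); last by ring.
  by apply: size_polyB_leq; rewrite ?size_polyX ?size_poly1.
have sd : (size (0%:P * (1%:P * b) + 1%:P * g)%R <= p.+1)%N.
  rewrite mul0r add0r mul1r size_polyN.
  by apply: size_polyB_leq; rewrite ?size_polyXn ?size_polyX // ltnS ltnW.
have sG0 : (size (G`_0)%R <= 1)%N.
  rewrite coef0M !coef_poly prime_gt0 // !expr0 !scale1r pbinom0 mul1r fact0 invr1.
  by rewrite scale1r size_poly1.
rewrite -Gp; apply: leq_trans
  (size_coef_ode natrFp_neq0 (e1 := 1) (e2 := p) _ sc sd sG0 ode _) _.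
- by rewrite -muln2; lia.
- by rewrite prednK ?prime_gt0.
rewrite bin2odd //; have := odd_double_half p; rewrite p_odd add1n.
move: p_gt2; set h := p./2 => + p_eq; rewrite -p_eq /= doubleK -muln2; nia.
Qed.

Lemma laguerre_at0 : (laguerre ('X ^+ p : P) ('X ^+ p - 'X)).[0] = 1.
Proof.
have p0 := prime_gt0 p_prime.
rewrite /laguerre horner_sum (bigD1 (Ordinal p0)) //= big1 ?addr0 => [|k k0].
  rewrite hornerM subn0 horner_pbinom_N1 ?factFp_neq0 ?ltn_predL //.
    by rewrite signFp_pred expr0 fact0 invr1 scale1r hornerC mul1r.
  by rewrite !hornerE expr0n eqn0Ngt p0 sub0r.
have {}k0 : k != 0%N :> nat by apply: contra k0 => /eqP k0; apply/eqP/val_inj.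
rewrite hornerM [X in _ * X]hornerZ horner_exp !hornerE expr0n eqn0Ngt p0 /=.
by rewrite subrr oppr0 expr0n (negbTE k0) !mulr0.
Qed.

(* After the shift alpha |-> alpha + c, the k-th term is divisible by alpha^p when
   k < p - c (the binomial has the factor alpha^p + c - 1 - (c - 1)), and by alpha^k
   otherwise since alpha^p - alpha = alpha (alpha^(p-1) - 1). *)
Lemma laguerre_dvdp c : (0 < c < p)%N ->
  ('X - (c%:R : F)%:P) ^+ (p - c) %| laguerre ('X ^+ p : P) ('X ^+ p - 'X).
Proof.
move=> c_bd; apply: dvdp_XsubC_exp_shift; set z : F := c%:R.
have Xp_shift : 'X ^+ p \Po ('X + z%:P) = 'X ^+ p + z%:P :> P.
  rewrite rmorphXn /= comp_polyX exprDn_pchar; last by rewrite pnatE // pchar_poly pchar_Fp.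
  by rewrite -polyC_exp expFp_card.
have g_shift : ('X ^+ p - 'X) \Po ('X + z%:P) = 'X ^+ p - 'X :> P.
  by rewrite rmorphB /= Xp_shift comp_polyX; ring.
rewrite /laguerre rmorph_sum /=.
apply: (big_ind (fun f => 'X ^+ (p - c) %| f)) => [||k _]; first exact: dvdp0.
  exact: dvdp_add.
rewrite rmorphM /= comp_pbinom [X in _ * X]linearZ /= rmorphXn rmorphN /= g_shift.
rewrite rmorphB /= Xp_shift comp_polyC; have [kc | ck] := ltnP k (p - c).
  apply: dvdp_mulr; apply: dvdp_trans (dvdp_exp2l 'X (leq_subr c p)) _.
  rewrite {1}(_ : 'X ^+ p = 'X ^+ p + z%:P - 1%:P - c.-1%:R%:P).
    by apply: dvdp_pbinom; lia.
  by rewrite /z -{1}(prednK (n := c)) -?natr1 ?rmorphD; [ring | lia].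
apply: dvdp_mull; rewrite -mul_polyC; apply: dvdp_mull.
rewrite (_ : - ('X ^+ p - 'X) = 'X * (1 - 'X ^+ p.-1)).
  by rewrite exprMn; apply: dvdp_mulr; apply: dvdp_exp2l.
by rewrite mulrBr mulr1 -exprS prednK ?prime_gt0 // opprB.
Qed.

Lemma sum_nat_lt_p : (\sum_(1 <= k < p) k)%N = 'C(p, 2).
Proof. by rewrite -bin2_sum [in RHS]big_ltn ?prime_gt0. Qed.

Definition root_divisor : P := \prod_(c <- index_iota 1 p) ('X - (c%:R : F)%:P) ^+ (p - c).

Lemma size_root_divisor : size root_divisor = 'C(p, 2).+1.
Proof.
rewrite size_prod_seq => [|c _]; last by rewrite expf_neq0 // polyXsubC_eq0.
under eq_bigr do rewrite size_exp_XsubC -addn1.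
rewrite big_split /= sum1_size -sum_nat_lt_p big_nat_rev /=.
rewrite (eq_big_nat _ _ (F2 := id)) => [|k k_bd]; last by rewrite add1n subSS; lia.
by rewrite size_iota; lia.
Qed.

Lemma root_divisor_at0 : root_divisor.[0] != 0.
Proof.
rewrite horner_prod prodf_seq_neq0; apply/allP => c; rewrite mem_index_iota => c_bd.
by rewrite horner_exp expf_neq0 // !hornerE oppr_eq0 natrFp_neq0.
Qed.

Lemma root_divisor_dvdp f :
  (forall c, (0 < c < p)%N -> ('X - (c%:R : F)%:P) ^+ (p - c) %| f) -> root_divisor %| f.
Proof.
move=> dvd_f; apply: dvdp_prod_XsubC_exp => [|c]; last by rewrite mem_index_iota => /dvd_f.
rewrite map_inj_in_uniq ?iota_uniq // => a b; rewrite !mem_index_iota => a_bd b_bd.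
by apply: natrFp_inj; lia.
Qed.

Definition laguerre_prod : P := (1 - 'X ^+ p.-1) * lin_prod.

Lemma dvdp_laguerre_prod c : (0 < c < p)%N ->
  ('X - (c%:R : F)%:P) ^+ (p - c) %| laguerre_prod.
Proof.
move=> c_bd; have c0 : c%:R != 0 :> F by apply: natrFp_neq0.
rewrite /laguerre_prod lin_prod_from1 (bigD1_seq (p - c)%N) ?iota_uniq //=.
  2: by rewrite mem_index_iota; lia.
have pc : (p - c = (p - c).-1.+1)%N by lia.
rewrite {1}pc exprS mulrA; apply: dvdp_mulr; apply: dvdp_mul.
  by rewrite dvdp_XsubCl /root !hornerE expFp_pred // subrr.
apply: dvdp_exp2r; rewrite dvdp_XsubCl /root !hornerE natrFpB; last by lia.
by rewrite invrN mulNr mulVf // subrr.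
Qed.

Lemma size_laguerre_prod : (size laguerre_prod <= 'C(p, 2).+1)%N.
Proof.
have size_1subX : (size (1 - 'X ^+ p.-1 : P)%R <= p.-1.+1)%N.
  by apply: size_polyB_leq; rewrite ?size_poly1 ?size_polyXn.
have size_prod : (size lin_prod <= (\sum_(1 <= k < p) k.-1).+1)%N.
  rewrite lin_prod_from1; apply: size_big_prod_leq => k.
  have sq : (size (1 + (k%:R : F)^-1 *: 'X : P)%R <= 2)%N.
    apply: size_polyD_leq; first by rewrite size_poly1.
    by rewrite (leq_trans (size_scale_leq _ _)) ?size_polyX.
  elim: k.-1 => [|n IH]; first by rewrite expr0 size_poly1.
  by rewrite exprS; apply: size_polyM_leq sq IH.
rewrite /laguerre_prod; apply: leq_trans (size_polyM_leq size_1subX size_prod) _.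
rewrite -sum_nat_lt_p (_ : \sum_(1 <= k < p) k = \sum_(1 <= k < p) k.-1 + (p - 1) * 1)%N.
  by rewrite muln1 subn1 addnC.
by rewrite -sum_nat_const_nat -big_split; apply: eq_big_nat => k /andP[k1 _] /=; lia.
Qed.

Lemma laguerre_prod_at0 : laguerre_prod.[0] = 1.
Proof.
rewrite /laguerre_prod hornerM horner_prod big1 => [|k _]; last first.
  by rewrite horner_exp !hornerE expr1n.
by rewrite !hornerE expr0n eqn0Ngt ltn_predRL p_gt1 subr0.
Qed.

Lemma laguerre_prodE : laguerre_prod = laguerre ('X ^+ p : P) ('X ^+ p - 'X).
Proof.
apply: (@dvdp_size_horner_eq _ root_divisor _ _ 0); rewrite ?size_root_divisor.
- by apply: root_divisor_dvdp => c /dvdp_laguerre_prod.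
- by apply: root_divisor_dvdp => c /laguerre_dvdp.
- exact: size_laguerre_prod.
- exact: size_laguerre.
- exact: root_divisor_at0.
- by rewrite laguerre_prod_at0 laguerre_at0.
Qed.

End BpolyProduct.

Theorem corollary16 (p : nat) (hp : prime p) (hodd : odd p) :
  \prod_(1 <= s < p.-1) bpoly p 1 s
    = \prod_(2 <= k < p) (1 + ((k%:R : 'F_p)^-1) *: 'X) ^+ k.-1
  /\ (1 - 'X ^+ p.-1) * \prod_(1 <= s < p.-1) bpoly p 1 s
    = laguerre ('X ^+ p) ('X ^+ p - 'X).
Proof.
split; first exact: prod_bpoly.
by rewrite prod_bpoly //; apply: laguerre_prodE.
Qed.
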